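(* There exists a visual Gromov-hyperbolic metric space $X$ such that $\operatorname{asdim} X = 2$ and $\dim(\partial X) = 0$. In particular, the inequality $\operatorname{asdim} X \leq \dim(\partial X) + 1$ fails for $X$.
   Context: For a metric space $(X,d)$ and $x,y,w \in X$, the Gromov product is $(x|y)_w = \frac{1}{2}\big(d(x,w)+d(y,w)-d(x,y)\big)$. $X$ is $\delta$-hyperbolic if $(x|z)_w \geq \min\{(x|y)_w,(y|z)_w\} - \delta$ for all $x,y,z,w \in X$, and Gromov-hyperbolic if it is $\delta$-hyperbolic for some $\delta \geq 0$. A sequence $(x_i)$ converges at infinity if $(x_i|x_j)_w \to \infty$ as $i,j\to\infty$; two such sequences $(x_i),(y_i)$ are equivalent if $(x_i|y_j)_w \to \infty$. The boundary $\partial X$ is the set of equivalence classes, with the topology in which two classes are close when $\liminf_{i,j\to\infty}(x_i|y_j)_w$ is large (equivalently, the topology induced by a visual metric); $\dim(\partial X)$ denotes its topological (covering) dimension. A geodesic ray is an isometric embedding $[0,\infty)\to X$. A hyperbolic space $X$ is visual if there exist $x_0 \in X$ and $D>0$ such that for every $x\in X$ there is a geodesic ray $r$ starting at $x_0$ with $d(x,r)\leq D$. The asymptotic dimension $\operatorname{asdim} X$ is the minimal $n$ such that for every $d>0$ there is a cover of $X$ by sets of uniformly bounded diameter such that every ball of radius $d$ in $X$ meets at most $n+1$ of the sets. *)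

From Stdlib Require Import Reals Lra List.
Import ListNotations.
Open Scope R_scope.

Record MetricSpace := {
  carrier :> Type;
  dist : carrier -> carrier -> R;
  dist_eq0 : forall x y, dist x y = 0 <-> x = y;
  dist_sym : forall x y, dist x y = dist y x;
  dist_tri : forall x y z, dist x z <= dist x y + dist y z
}.

Arguments dist {m} _ _.

Section Hyp.
Variable X : MetricSpace.

Definition gromov_product (w x y : X) : R :=
  (dist x w + dist y w - dist x y) / 2.

Definition delta_hyperbolic (delta : R) : Prop :=
  forall x y z w : X,
    gromov_product w x z >= Rmin (gromov_product w x y) (gromov_product w y z) - delta.

Definition gromov_hyperbolic : Prop :=
  exists delta, 0 <= delta /\ delta_hyperbolic delta.

Definition geodesic_ray (r : R -> X) : Prop :=
  forall s t, 0 <= s -> 0 <= t -> dist (r s) (r t) = Rabs (s - t).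

Definition dist_to_ray_le (x : X) (r : R -> X) (D : R) : Prop :=
  forall eps, 0 < eps -> exists t, 0 <= t /\ dist x (r t) <= D + eps.

Definition visual : Prop :=
  exists (x0 : X) (D : R), 0 < D /\
    forall x : X, exists r : R -> X,
      geodesic_ray r /\ r 0 = x0 /\ dist_to_ray_le x r D.

Definition closed_ball (x : X) (d : R) : X -> Prop := fun y => dist x y <= d.

Definition asdim_le (n : nat) : Prop :=
  forall d, 0 < d ->
    exists (U : (X -> Prop) -> Prop),
      (forall x : X, exists A, U A /\ A x) /\
      (exists Dm, forall A, U A -> forall x y, A x -> A y -> dist x y <= Dm) /\
      (forall (x : X) (l : list (X -> Prop)),
          NoDup l -> length l = S (S n) -> (forall A, In A l -> U A) ->
          exists A, In A l /\ ~ (exists y, closed_ball x d y /\ A y)).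

Definition asdim_eq (n : nat) : Prop :=
  asdim_le n /\ match n with 0%nat => True | S m => ~ asdim_le m end.

Definition converges_at_infinity (w : X) (x : nat -> X) : Prop :=
  forall K, exists N, forall i j, (N <= i)%nat -> (N <= j)%nat ->
    gromov_product w (x i) (x j) >= K.

Definition equiv_at_infinity (w : X) (x y : nat -> X) : Prop :=
  forall K, exists N, forall i j, (N <= i)%nat -> (N <= j)%nat ->
    gromov_product w (x i) (y j) >= K.

Definition boundary_class (w : X) (x : nat -> X) : (nat -> X) -> Prop :=
  fun y => converges_at_infinity w y /\ equiv_at_infinity w x y.

Definition boundary (w : X) : Type :=
  { C : (nat -> X) -> Prop |
    exists x, converges_at_infinity w x /\ C = boundary_class w x }.

Definition boundary_close (w : X) (xi eta : boundary w) (r : R) : Prop :=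
  exists x y, proj1_sig xi x /\ proj1_sig eta y /\
    exists N, forall i j, (N <= i)%nat -> (N <= j)%nat ->
      gromov_product w (x i) (y j) >= r.

Definition boundary_open (w : X) (U : boundary w -> Prop) : Prop :=
  forall xi, U xi -> exists r, forall eta, boundary_close w xi eta r -> U eta.

End Hyp.

Definition covdim_le (Z : Type) (op : (Z -> Prop) -> Prop) (n : nat) : Prop :=
  forall cov : list (Z -> Prop),
    Forall op cov -> (forall z, exists A, In A cov /\ A z) ->
    exists ref : list (Z -> Prop),
      Forall op ref /\
      (forall z, exists B, In B ref /\ B z) /\
      (forall B, In B ref -> exists A, In A cov /\ forall z, B z -> A z) /\
      (forall (z : Z) (l : list (Z -> Prop)),
          NoDup l -> length l = S (S n) -> (forall B, In B l -> In B ref) ->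
          exists B, In B l /\ ~ B z).

(** dim Z = n  (dim of the empty space is -1, so dim = 0 requires nonemptiness) *)
Definition covdim_eq (Z : Type) (op : (Z -> Prop) -> Prop) (n : nat) : Prop :=
  covdim_le Z op n /\
  match n with 0%nat => inhabited Z | S m => ~ covdim_le Z op m end.

(* X is a logarithmic upper half-plane over a discrete set of abscissae: its points are
   pairs (p, h) with 0 < h < 1 and p in a set P of reals, together with a root (0, 1), and
   d(x, y) = 2 ln N(x, y) - ln h_x - ln h_y with N(x, y) = min(|p_x - p_y| + max(h_x, h_y), 1).
   The quantity N satisfies a Ptolemy-type inequality, which makes X Gromov-hyperbolic, and
   the vertical rays from the root make it visual.

   P is the union over n >= 1 of the clusters {3n + j/n^2 : 0 <= j <= n}.  Every cluster is
   finite, so a sequence converging at infinity is eventually vertical over a single point of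
   P and every boundary point is isolated: the boundary is discrete, of dimension 0.  On the
   other hand the cluster of index 2^(m+1) carries a triangulated grid of mesh at most 3 whose
   sides are about m ln 2 apart, and Sperner's lemma forces every uniformly bounded cover to
   have multiplicity 3 on it, so asdim X >= 2.  Conversely, for every radius X is covered by
   uniformly bounded bricks (bands of fixed logarithmic height in depth, cut into intervals
   of geometrically shrinking width) such that every ball of that radius meets at most three
   of them, so asdim X <= 2. *)

From Stdlib Require Import Reals List Lra Lia Psatz ZArith Bool Classical
  ClassicalEpsilon ProofIrrelevance FunctionalExtensionality PropExtensionality.
Import ListNotations.

Open Scope R_scope.

Ltac case_Rle :=
  repeat match goal with
  | |- context [Rle_dec ?a ?b] => destruct (Rle_dec a b)
  | H : context [Rle_dec ?a ?b] |- _ => destruct (Rle_dec a b)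
  end.

Lemma ln_le_ln a b : 0 < a -> a <= b -> ln a <= ln b.
Proof.
  intros Ha Hab. destruct (Req_dec a b) as [->|Hne]; [lra|].
  left; apply ln_increasing; lra.
Qed.

Lemma exp_le_exp a b : a <= b -> exp a <= exp b.
Proof.
  intro Hab. destruct (Req_dec a b) as [->|Hne]; [lra|].
  left; apply exp_increasing; lra.
Qed.

Lemma ln_nonpos a : 0 < a -> a <= 1 -> ln a <= 0.
Proof. intros. rewrite <- ln_1. apply ln_le_ln; lra. Qed.

Lemma ln_div a b : 0 < a -> 0 < b -> ln (a / b) = ln a - ln b.
Proof.
  intros. unfold Rdiv. rewrite ln_mult, ln_Rinv by (try apply Rinv_0_lt_compat; auto). ring.
Qed.

Lemma ln2_pos : 0 < ln 2.
Proof. rewrite <- ln_1. apply ln_increasing; lra. Qed.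

Lemma Rabs_le_between a b : Rabs a <= b -> - b <= a <= b.
Proof. unfold Rabs. destruct (Rcase_abs a); lra. Qed.

Lemma Rabs_sub_triangle a b c : Rabs (a - c) <= Rabs (a - b) + Rabs (b - c).
Proof. replace (a - c) with ((a - b) + (b - c)) by ring. apply Rabs_triang. Qed.

(** * The set of abscissae *)

Definition cluster_point (p : R) : Prop :=
  exists n j : nat, (1 <= n)%nat /\ (j <= n)%nat /\
    p = 3 * INR n + INR j / (INR n * INR n).

Lemma cluster_offset_bounds n j :
  (1 <= n)%nat -> (j <= n)%nat -> 0 <= INR j / (INR n * INR n) <= 1.
Proof.
  intros Hn Hj. apply le_INR in Hn, Hj. simpl in Hn. pose proof (pos_INR j).
  split.
  - apply Rmult_le_pos; [lra|]. left; apply Rinv_0_lt_compat; nra.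
  - apply Rmult_le_reg_r with (INR n * INR n); [nra|].
    unfold Rdiv. rewrite Rmult_assoc, Rinv_l by nra. nra.
Qed.

Lemma INR_eq_of_close a b : Rabs (INR a - INR b) < 1 -> a = b.
Proof.
  intro H. destruct (Nat.lt_total a b) as [h|[h|h]]; auto; exfalso;
    apply le_INR in h; rewrite S_INR in h; apply Rabs_def2 in H; lra.
Qed.

Lemma cluster_index_eq n j n' j' :
  (1 <= n)%nat -> (j <= n)%nat -> (1 <= n')%nat -> (j' <= n')%nat ->
  Rabs ((3 * INR n + INR j / (INR n * INR n))
        - (3 * INR n' + INR j' / (INR n' * INR n'))) < 1 ->
  n = n'.
Proof.
  intros H1 H2 H3 H4 H.
  pose proof (cluster_offset_bounds _ _ H1 H2).
  pose proof (cluster_offset_bounds _ _ H3 H4).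
  apply INR_eq_of_close. apply Rabs_def2 in H. apply Rabs_def1; lra.
Qed.

Lemma cluster_uniformly_discrete p : cluster_point p ->
  exists eps, 0 < eps /\ forall q r, cluster_point q -> cluster_point r ->
    Rabs (p - q) < 1 -> Rabs (p - r) < 1 -> Rabs (q - r) < eps -> q = r.
Proof.
  intros (n & j & Hn & Hj & ->).
  assert (Hn1 : 1 <= INR n) by (apply le_INR in Hn; simpl in Hn; lra).
  exists (/ (INR n * INR n)). split; [apply Rinv_0_lt_compat; nra|].
  intros q r (n1 & j1 & Hn1' & Hj1 & ->) (n2 & j2 & Hn2 & Hj2 & ->) Hq Hr Hqr.
  pose proof (cluster_index_eq _ _ _ _ Hn Hj Hn1' Hj1 Hq).
  pose proof (cluster_index_eq _ _ _ _ Hn Hj Hn2 Hj2 Hr). subst n1 n2.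
  enough (j1 = j2) by (subst; reflexivity).
  apply INR_eq_of_close.
  replace (INR j1 - INR j2) with
    ((3 * INR n + INR j1 / (INR n * INR n) - (3 * INR n + INR j2 / (INR n * INR n)))
     * (INR n * INR n)) by (field; lra).
  rewrite Rabs_mult, (Rabs_right (INR n * INR n)) by nra.
  apply Rmult_lt_reg_r with (/ (INR n * INR n)); [apply Rinv_0_lt_compat; nra|].
  rewrite Rmult_assoc, Rinv_r, Rmult_1_r, Rmult_1_l by nra. exact Hqr.
Qed.

Lemma cluster_discrete p : cluster_point p ->
  exists eps, 0 < eps /\ forall q, cluster_point q -> Rabs (p - q) < eps -> q = p.
Proof.
  intro Hp. destruct (cluster_uniformly_discrete p Hp) as (e & He & H).
  exists (Rmin e 1). split; [apply Rmin_glb_lt; lra|].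
  intros q Hq Hpq. pose proof (Rmin_l e 1); pose proof (Rmin_r e 1).
  apply (H q p Hq Hp); try lra.
  - rewrite Rminus_diag, Rabs_R0; lra.
  - rewrite Rabs_minus_sym; lra.
Qed.

(** * The space *)

Definition admissible (p h : R) : Prop :=
  (cluster_point p /\ 0 < h < 1) \/ (p = 0 /\ h = 1).

Record pt := mkpt { px : R; ph : R; admissible_pt : admissible px ph }.
Arguments mkpt : clear implicits.

Lemma ph_pos x : 0 < ph x.
Proof. destruct x as [p h v]; simpl; destruct v as [[_ H]|[_ H]]; lra. Qed.

Lemma ph_le1 x : ph x <= 1.
Proof. destruct x as [p h v]; simpl; destruct v as [[_ H]|[_ H]]; lra. Qed.

Lemma ln_ph_nonpos x : ln (ph x) <= 0.
Proof. apply ln_nonpos; [apply ph_pos|apply ph_le1]. Qed.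

Lemma pt_eq (x y : pt) : px x = px y -> ph x = ph y -> x = y.
Proof.
  destruct x as [p h v], y as [p' h' v']; simpl; intros -> ->.
  f_equal; apply proof_irrelevance.
Qed.

Definition join_height (x y : pt) : R :=
  Rmin (Rabs (px x - px y) + Rmax (ph x) (ph y)) 1.

Definition pt_dist (x y : pt) : R :=
  2 * ln (join_height x y) - ln (ph x) - ln (ph y).

Lemma join_height_ge_l x y : ph x <= join_height x y.
Proof.
  unfold join_height. pose proof (ph_le1 x). pose proof (Rmax_l (ph x) (ph y)).
  pose proof (Rabs_pos (px x - px y)). apply Rmin_glb; lra.
Qed.

Lemma join_height_ge_r x y : ph y <= join_height x y.
Proof.
  unfold join_height. pose proof (ph_le1 y). pose proof (Rmax_r (ph x) (ph y)).
  pose proof (Rabs_pos (px x - px y)). apply Rmin_glb; lra.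
Qed.

Lemma join_height_pos x y : 0 < join_height x y.
Proof. pose proof (join_height_ge_l x y); pose proof (ph_pos x); lra. Qed.

Lemma join_height_le1 x y : join_height x y <= 1.
Proof. apply Rmin_r. Qed.

Lemma join_height_sym x y : join_height x y = join_height y x.
Proof. unfold join_height. rewrite Rabs_minus_sym, Rmax_comm. reflexivity. Qed.

Lemma join_height_self x : join_height x x = ph x.
Proof.
  unfold join_height. rewrite Rminus_diag, Rabs_R0, Rplus_0_l, Rmax_left by lra.
  apply Rmin_left, ph_le1.
Qed.

Lemma join_height_vertical x y : px x = px y -> join_height x y <= Rmax (ph x) (ph y).
Proof.
  intro E. unfold join_height. rewrite E, Rminus_diag, Rabs_R0, Rplus_0_l. apply Rmin_l.
Qed.

Lemma join_height_lt1_abscissa x y :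
  join_height x y < 1 -> Rabs (px x - px y) <= join_height x y.
Proof.
  unfold join_height. pose proof (ph_pos x). pose proof (Rmax_l (ph x) (ph y)).
  unfold Rmin. destruct (Rle_dec _ _); lra.
Qed.

Lemma join_height_lt1_cluster x y : join_height x y < 1 -> cluster_point (px x).
Proof.
  intro H. pose proof (join_height_ge_l x y).
  destruct (admissible_pt x) as [[Hp _]|[_ Hh]]; auto. lra.
Qed.

Lemma join_height_triangle x y z : join_height x z <= join_height x y + join_height y z.
Proof.
  unfold join_height.
  pose proof (Rabs_sub_triangle (px x) (px y) (px z)).
  pose proof (ph_pos x); pose proof (ph_pos y); pose proof (ph_pos z).
  pose proof (Rabs_pos (px x - px y)); pose proof (Rabs_pos (px y - px z)).
  unfold Rmin, Rmax; case_Rle; lra.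
Qed.

Lemma join_height_mul_triangle x y z :
  join_height x z * ph y <= join_height x y * join_height y z.
Proof.
  unfold join_height.
  pose proof (Rabs_sub_triangle (px x) (px y) (px z)).
  pose proof (Rabs_pos (px x - px y)); pose proof (Rabs_pos (px y - px z)).
  pose proof (ph_pos x); pose proof (ph_pos y); pose proof (ph_pos z).
  pose proof (ph_le1 x); pose proof (ph_le1 y); pose proof (ph_le1 z).
  unfold Rmin, Rmax; case_Rle; nra.
Qed.

Lemma pt_dist_sym x y : pt_dist x y = pt_dist y x.
Proof. unfold pt_dist. rewrite join_height_sym. ring. Qed.

Lemma pt_dist_self x : pt_dist x x = 0.
Proof. unfold pt_dist. rewrite join_height_self. ring. Qed.

Lemma pt_dist_triangle x y z : pt_dist x z <= pt_dist x y + pt_dist y z.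
Proof.
  unfold pt_dist.
  pose proof (join_height_pos x z); pose proof (join_height_pos x y);
  pose proof (join_height_pos y z); pose proof (ph_pos y).
  assert (Hln : ln (join_height x z * ph y) <= ln (join_height x y * join_height y z))
    by (apply ln_le_ln; [nra|apply join_height_mul_triangle]).
  rewrite !ln_mult in Hln by auto. lra.
Qed.

Lemma pt_dist_eq0 x y : pt_dist x y = 0 <-> x = y.
Proof.
  split; [|intros ->; apply pt_dist_self].
  unfold pt_dist; intro H.
  pose proof (ln_le_ln _ _ (ph_pos x) (join_height_ge_l x y)).
  pose proof (ln_le_ln _ _ (ph_pos y) (join_height_ge_r x y)).
  assert (Ex : ph x = join_height x y)
    by (apply ln_inv; [apply ph_pos|apply join_height_pos|lra]).
  assert (Ey : ph y = join_height x y)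
    by (apply ln_inv; [apply ph_pos|apply join_height_pos|lra]).
  assert (Hh : ph x = ph y) by congruence.
  apply pt_eq; [|exact Hh].
  destruct (Req_dec (join_height x y) 1) as [E1|E1].
  - destruct (admissible_pt x) as [[_ ?]|[-> _]]; [lra|].
    destruct (admissible_pt y) as [[_ ?]|[-> _]]; [lra|reflexivity].
  - pose proof (join_height_lt1_abscissa x y ltac:(pose proof (join_height_le1 x y); lra)).
    unfold join_height in Ex. rewrite <- Hh, Rmax_left in Ex by lra.
    unfold Rmin in Ex. destruct (Rle_dec _ _) as [_|]; [|lra].
    apply Rminus_diag_uniq. destruct (Req_dec (px x - px y) 0) as [|Hne]; [assumption|].
    apply Rabs_no_R0 in Hne. pose proof (Rabs_pos (px x - px y)). lra.
Qed.

Lemma pt_dist_ge_height_ratio x y : ln (ph y) - ln (ph x) <= pt_dist x y.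
Proof.
  unfold pt_dist. pose proof (ln_le_ln _ _ (ph_pos y) (join_height_ge_r x y)).
  pose proof (ln_le_ln _ _ (ph_pos x) (join_height_ge_l x y)). lra.
Qed.

Lemma pt_dist_ge_abscissa_gap x y a : 0 < a -> a <= Rabs (px x - px y) -> a <= 1 ->
  ln a - ln (ph x) <= pt_dist x y.
Proof.
  intros Ha H1 H2. unfold pt_dist.
  pose proof (ln_le_ln _ _ (ph_pos y) (join_height_ge_r x y)).
  assert (a <= join_height x y).
  { unfold join_height. apply Rmin_glb; auto.
    pose proof (ph_pos x); pose proof (Rmax_l (ph x) (ph y)); lra. }
  pose proof (ln_le_ln _ _ Ha H0). lra.
Qed.

Lemma pt_dist_le3_of_adjacent x y : Rabs (px x - px y) <= Rmin (ph x) (ph y) ->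
  ph x <= 2 * ph y -> ph y <= 2 * ph x -> pt_dist x y <= 3.
Proof.
  intros H1 H2 H3. pose proof (ph_pos x); pose proof (ph_pos y).
  pose proof (join_height_pos x y) as Hj.
  assert (HN : join_height x y <= 2 * Rmax (ph x) (ph y)).
  { unfold join_height. eapply Rle_trans; [apply Rmin_l|].
    pose proof (Rmin_l (ph x) (ph y)); pose proof (Rmax_l (ph x) (ph y)). lra. }
  assert (HN2 : join_height x y * join_height x y <= 8 * (ph x * ph y))
    by (unfold Rmax in HN; destruct (Rle_dec _ _); nra).
  apply ln_le_ln in HN2; [|nra]. rewrite !ln_mult in HN2 by nra.
  assert (ln 8 <= 3).
  { rewrite <- (ln_exp 3). apply ln_le_ln; [lra|].
    replace 3 with (1 + 1 + 1) by ring. rewrite !exp_plus.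
    pose proof (exp_ineq1_le 1). nra. }
  unfold pt_dist. lra.
Qed.

Definition cluster_space : MetricSpace :=
  Build_MetricSpace pt pt_dist pt_dist_eq0 pt_dist_sym pt_dist_triangle.

(** * Hyperbolicity *)

Lemma four_point_delta_hyperbolic (Y : MetricSpace) (delta : R) :
  (forall x y z w : Y, dist x z + dist y w <=
     Rmax (dist x y + dist z w) (dist x w + dist y z) + 2 * delta) ->
  delta_hyperbolic Y delta.
Proof.
  intros H x y z w. unfold gromov_product. pose proof (H x y z w).
  unfold Rmin, Rmax in *. case_Rle; lra.
Qed.

Lemma diagonal_product_le a b c e p q :
  0 < a -> 0 < b -> 0 < c -> 0 < e -> 0 < p -> 0 < q ->
  p <= a + b -> p <= c + e -> q <= b + c -> q <= a + e ->
  p * q <= 4 * Rmax (a * c) (b * e).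
Proof.
  intros. pose proof (Rmax_l (a * c) (b * e)); pose proof (Rmax_r (a * c) (b * e)).
  (* the smallest side bounds both diagonals through its two neighbours *)
  assert (K : (a <= b /\ a <= e) \/ (b <= a /\ b <= c) \/
              (c <= b /\ c <= e) \/ (e <= a /\ e <= c)).
  { destruct (Rle_dec a b), (Rle_dec a e), (Rle_dec b c), (Rle_dec c e),
      (Rle_dec a c), (Rle_dec b e); lra. }
  destruct K as [[K1 K2]|[[K1 K2]|[[K1 K2]|[K1 K2]]]].
  - apply Rle_trans with ((2 * b) * (2 * e)); [apply Rmult_le_compat; lra|nra].
  - apply Rle_trans with ((2 * a) * (2 * c)); [apply Rmult_le_compat; lra|nra].
  - apply Rle_trans with ((2 * e) * (2 * b)); [apply Rmult_le_compat; lra|nra].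
  - apply Rle_trans with ((2 * c) * (2 * a)); [apply Rmult_le_compat; lra|nra].
Qed.

Lemma pt_dist_four_point x y z w :
  pt_dist x z + pt_dist y w <=
  Rmax (pt_dist x y + pt_dist z w) (pt_dist x w + pt_dist y z) + 2 * ln 4.
Proof.
  pose proof (diagonal_product_le (join_height x y) (join_height y z)
    (join_height z w) (join_height x w) (join_height x z) (join_height y w)
    (join_height_pos _ _) (join_height_pos _ _) (join_height_pos _ _)
    (join_height_pos _ _) (join_height_pos _ _) (join_height_pos _ _)
    (join_height_triangle x y z)
    ltac:(rewrite (join_height_sym z w), Rplus_comm; apply join_height_triangle)
    (join_height_triangle y z w)
    ltac:(rewrite (join_height_sym x y); apply join_height_triangle)) as H.
  pose proof (join_height_pos x y); pose proof (join_height_pos y z);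
  pose proof (join_height_pos z w); pose proof (join_height_pos x w);
  pose proof (join_height_pos x z); pose proof (join_height_pos y w).
  unfold pt_dist.
  set (a := join_height x y) in *; set (b := join_height y z) in *;
  set (c := join_height z w) in *; set (e := join_height x w) in *;
  set (p := join_height x z) in *; set (q := join_height y w) in *.
  assert (Hlog : ln p + ln q <= ln 4 + ln a + ln c \/ ln p + ln q <= ln 4 + ln b + ln e).
  { rewrite <- !ln_mult by nra. unfold Rmax in H. destruct (Rle_dec _ _).
    - right. apply ln_le_ln; nra.
    - left. apply ln_le_ln; nra. }
  unfold Rmax. case_Rle; lra.
Qed.

Lemma cluster_space_hyperbolic : gromov_hyperbolic cluster_space.
Proof.
  exists (ln 4). split; [rewrite <- ln_1; apply ln_le_ln; lra|].
  apply four_point_delta_hyperbolic. exact pt_dist_four_point.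
Qed.

(** * Visuality *)

Definition root : pt := mkpt 0 1 (or_intror (conj eq_refl eq_refl)).

Lemma pt_dist_vertical x y : px x = px y -> pt_dist x y = Rabs (ln (ph x) - ln (ph y)).
Proof.
  intro E. pose proof (join_height_vertical x y E) as Hle.
  pose proof (join_height_ge_l x y); pose proof (join_height_ge_r x y).
  pose proof (ph_pos x); pose proof (ph_pos y).
  unfold pt_dist, Rmax in *. destruct (Rle_dec (ph x) (ph y)).
  - replace (join_height x y) with (ph y) by lra.
    pose proof (ln_le_ln (ph x) (ph y) H1 r).
    rewrite Rabs_left1 by lra. lra.
  - replace (join_height x y) with (ph x) by lra.
    pose proof (ln_le_ln (ph y) (ph x) ltac:(auto) ltac:(lra)).
    rewrite Rabs_right by lra. lra.
Qed.

Lemma pt_dist_root y : pt_dist root y = - ln (ph y).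
Proof.
  unfold pt_dist, join_height; simpl. rewrite Rmax_left by apply ph_le1.
  rewrite Rmin_right by (pose proof (Rabs_pos (0 - px y)); lra).
  rewrite ln_1. ring.
Qed.

Lemma cluster_point_3 : cluster_point 3.
Proof. exists 1%nat, 0%nat. repeat split; try lia. simpl. field. Qed.

Lemma exp_neg_bounds t : 0 < t -> 0 < exp (- t) < 1.
Proof. intro. split; [apply exp_pos|]. rewrite <- exp_0. apply exp_increasing. lra. Qed.

Definition vertical_ray (p : R) (Hp : cluster_point p) (t : R) : pt :=
  match Rlt_dec 0 t with
  | left H => mkpt p (exp (- t)) (or_introl (conj Hp (exp_neg_bounds t H)))
  | right _ => root
  end.

Lemma vertical_ray_px p Hp t : 0 < t -> px (vertical_ray p Hp t) = p.
Proof. intro H. unfold vertical_ray. destruct (Rlt_dec 0 t); [reflexivity|lra]. Qed.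

Lemma vertical_ray_ph p Hp t : 0 < t -> ph (vertical_ray p Hp t) = exp (- t).
Proof. intro H. unfold vertical_ray. destruct (Rlt_dec 0 t); [reflexivity|lra]. Qed.

Lemma vertical_ray_root p Hp t : t <= 0 -> vertical_ray p Hp t = root.
Proof. intro H. unfold vertical_ray. destruct (Rlt_dec 0 t); [exfalso; lra|reflexivity]. Qed.

Lemma vertical_ray_geodesic p Hp : geodesic_ray cluster_space (vertical_ray p Hp).
Proof.
  intros s t Hs Ht. change (pt_dist (vertical_ray p Hp s) (vertical_ray p Hp t) = Rabs (s - t)).
  destruct (Rle_lt_dec s 0) as [s0|s0]; destruct (Rle_lt_dec t 0) as [t0|t0].
  - rewrite !vertical_ray_root, pt_dist_self by lra.
    replace (s - t) with 0 by lra. rewrite Rabs_R0; reflexivity.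
  - rewrite (vertical_ray_root _ _ s), pt_dist_root, vertical_ray_ph, ln_exp by lra.
    replace s with 0 by lra. rewrite Rabs_left by lra. ring.
  - rewrite (vertical_ray_root _ _ t), pt_dist_sym, pt_dist_root, vertical_ray_ph, ln_exp
      by lra.
    replace t with 0 by lra. rewrite Rabs_right by lra. ring.
  - rewrite pt_dist_vertical by (rewrite !vertical_ray_px; auto).
    rewrite !vertical_ray_ph, !ln_exp by auto.
    rewrite <- Rabs_Ropp. f_equal. ring.
Qed.

Lemma cluster_space_visual : visual cluster_space.
Proof.
  exists root, 1. split; [lra|]. intro x.
  destruct (admissible_pt x) as [[Hp Hh]|[Hp Hh]].
  - exists (vertical_ray (px x) Hp). split; [apply vertical_ray_geodesic|].
    split; [apply vertical_ray_root; lra|].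
    assert (Hdepth : 0 < - ln (ph x)).
    { enough (ln (ph x) < 0) by lra. rewrite <- ln_1. apply ln_increasing; lra. }
    intros eps He. exists (- ln (ph x)). split; [lra|].
    replace (vertical_ray (px x) Hp (- ln (ph x))) with x.
    + change (pt_dist x x <= 1 + eps). rewrite pt_dist_self. lra.
    + apply pt_eq; [rewrite vertical_ray_px; auto|].
      rewrite vertical_ray_ph, Ropp_involutive, exp_ln by lra. reflexivity.
  - exists (vertical_ray 3 cluster_point_3). split; [apply vertical_ray_geodesic|].
    split; [apply vertical_ray_root; lra|].
    intros eps He. exists 0. split; [lra|]. rewrite vertical_ray_root by lra.
    replace x with root by (apply pt_eq; simpl; auto).
    change (pt_dist root root <= 1 + eps). rewrite pt_dist_self. lra.
Qed.

(** * The boundary *)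

Lemma gromov_product_near_join_height w x y :
  Rabs (gromov_product cluster_space w x y + ln (join_height x y)) <= pt_dist w root.
Proof.
  change (Rabs ((pt_dist x w + pt_dist y w - pt_dist x y) / 2 + ln (join_height x y))
          <= pt_dist w root).
  assert (Hx : pt_dist x root = - ln (ph x)) by (rewrite pt_dist_sym; apply pt_dist_root).
  assert (Hy : pt_dist y root = - ln (ph y)) by (rewrite pt_dist_sym; apply pt_dist_root).
  pose proof (pt_dist_triangle x w root); pose proof (pt_dist_triangle y w root).
  pose proof (pt_dist_triangle x root w); pose proof (pt_dist_triangle y root w).
  assert (Hxy : pt_dist x y = 2 * ln (join_height x y) - ln (ph x) - ln (ph y))
    by reflexivity.
  rewrite (pt_dist_sym root w) in *. apply Rabs_le. lra.
Qed.

Lemma join_height_le_of_gromov w x y eps : 0 < eps ->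
  gromov_product cluster_space w x y >= pt_dist w root - ln eps -> join_height x y <= eps.
Proof.
  intros He H. pose proof (gromov_product_near_join_height w x y) as Hg.
  apply Rabs_le_between in Hg.
  rewrite <- (exp_ln (join_height x y)) by apply join_height_pos.
  rewrite <- (exp_ln eps) by auto. apply exp_le_exp. lra.
Qed.

Lemma gromov_ge_of_join_height w x y K :
  join_height x y <= exp (- (K + pt_dist w root)) -> gromov_product cluster_space w x y >= K.
Proof.
  intro H. pose proof (gromov_product_near_join_height w x y) as Hg.
  apply Rabs_le_between in Hg.
  apply ln_le_ln in H; [|apply join_height_pos]. rewrite ln_exp in H. lra.
Qed.

Lemma join_height_eventually_small w (x y : nat -> pt) :
  (forall K, exists N, forall i j, (N <= i)%nat -> (N <= j)%nat ->
     gromov_product cluster_space w (x i) (y j) >= K) ->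
  forall eps, 0 < eps -> exists N, forall i j, (N <= i)%nat -> (N <= j)%nat ->
     join_height (x i) (y j) <= eps.
Proof.
  intros H eps He. destruct (H (pt_dist w root - ln eps)) as [N HN].
  exists N. intros i j Hi Hj. exact (join_height_le_of_gromov w _ _ eps He (HN i j Hi Hj)).
Qed.

Definition eventually_vertical (x : nat -> pt) (p : R) : Prop :=
  cluster_point p /\ (exists N, forall i, (N <= i)%nat -> px (x i) = p) /\
  (forall eps, 0 < eps -> exists N, forall i, (N <= i)%nat -> ph (x i) <= eps).

Lemma converges_eventually_vertical w x :
  converges_at_infinity cluster_space w x -> exists p, eventually_vertical x p.
Proof.
  intro H. pose proof (join_height_eventually_small w x x H) as Hsmall.
  destruct (Hsmall (1/2) ltac:(lra)) as [N0 H0].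
  assert (Hp0 : cluster_point (px (x N0)))
    by (apply (join_height_lt1_cluster _ (x N0)); specialize (H0 N0 N0 (le_n _) (le_n _)); lra).
  destruct (cluster_uniformly_discrete _ Hp0) as (e & He & Hiso).
  destruct (Hsmall (Rmin (e/2) (1/2)) ltac:(apply Rmin_glb_lt; lra)) as [N1 H1].
  pose proof (Rmin_l (e/2) (1/2)); pose proof (Rmin_r (e/2) (1/2)).
  set (M := Nat.max N0 N1).
  assert (Hcl : forall i, (N1 <= i)%nat -> cluster_point (px (x i))).
  { intros i Hi. apply (join_height_lt1_cluster _ (x i)).
    specialize (H1 i i Hi Hi). lra. }
  exists (px (x M)). split; [|split].
  - apply Hcl; lia.
  - exists M. intros i Hi. apply Hiso; try (apply Hcl; lia).
    + specialize (H0 N0 i ltac:(lia) ltac:(lia)).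
      pose proof (join_height_lt1_abscissa (x N0) (x i)). lra.
    + specialize (H0 N0 M ltac:(lia) ltac:(lia)).
      pose proof (join_height_lt1_abscissa (x N0) (x M)). lra.
    + specialize (H1 i M ltac:(lia) ltac:(lia)).
      pose proof (join_height_lt1_abscissa (x i) (x M)). lra.
  - intros eps Heps. destruct (Hsmall eps Heps) as [N HN]. exists N. intros i Hi.
    specialize (HN i i Hi Hi). rewrite join_height_self in HN. exact HN.
Qed.

Lemma eventually_vertical_equiv w x y p :
  eventually_vertical x p -> eventually_vertical y p -> equiv_at_infinity cluster_space w x y.
Proof.
  intros (_ & [Nx Hx] & Hhx) (_ & [Ny Hy] & Hhy) K.
  set (eps := exp (- (K + pt_dist w root))). assert (He : 0 < eps) by apply exp_pos.
  destruct (Hhx eps He) as [N1 H1]; destruct (Hhy eps He) as [N2 H2].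
  exists (Nat.max (Nat.max Nx Ny) (Nat.max N1 N2)). intros i j Hi Hj.
  apply gromov_ge_of_join_height. fold eps.
  eapply Rle_trans; [apply join_height_vertical; rewrite Hx, Hy by lia; reflexivity|].
  apply Rmax_lub; [apply H1|apply H2]; lia.
Qed.

Lemma eventually_vertical_converges w x p :
  eventually_vertical x p -> converges_at_infinity cluster_space w x.
Proof. intro H. exact (eventually_vertical_equiv w x x p H H). Qed.

Lemma abscissa_separation w p : cluster_point p ->
  exists K, forall x y q, eventually_vertical x p -> eventually_vertical y q ->
    (exists N, forall i j, (N <= i)%nat -> (N <= j)%nat ->
       gromov_product cluster_space w (x i) (y j) >= K) ->
    q = p.
Proof.
  intro Hp. destruct (cluster_discrete p Hp) as (e & He & Hiso).
  set (eps := Rmin (e/2) (1/2)).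
  assert (Heps : 0 < eps) by (apply Rmin_glb_lt; lra).
  pose proof (Rmin_l (e/2) (1/2)); pose proof (Rmin_r (e/2) (1/2)).
  exists (pt_dist w root - ln eps).
  intros x y q (_ & [Nx Hx] & _) (Hq & [Ny Hy] & _) [N HN].
  set (M := Nat.max N (Nat.max Nx Ny)).
  specialize (HN M M ltac:(lia) ltac:(lia)).
  apply join_height_le_of_gromov in HN; auto.
  pose proof (join_height_lt1_abscissa (x M) (y M) ltac:(unfold eps in HN; lra)) as Hd.
  rewrite Hx, Hy in Hd by lia. apply Hiso; auto. unfold eps in *; lra.
Qed.

Lemma equiv_same_abscissa w x y p q : eventually_vertical x p -> eventually_vertical y q ->
  equiv_at_infinity cluster_space w x y -> q = p.
Proof.
  intros Hx Hy He. destruct (abscissa_separation w p (proj1 Hx)) as [K HK].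
  exact (HK x y q Hx Hy (He K)).
Qed.

Lemma boundary_class_vertical w x y p : eventually_vertical x p ->
  boundary_class cluster_space w x y -> eventually_vertical y p.
Proof.
  intros Hx [Hy Hxy]. destruct (converges_eventually_vertical w y Hy) as [q Hq].
  rewrite <- (equiv_same_abscissa w x y p q Hx Hq Hxy). exact Hq.
Qed.

Lemma boundary_class_eq w x y p : eventually_vertical x p -> eventually_vertical y p ->
  boundary_class cluster_space w x = boundary_class cluster_space w y.
Proof.
  intros Hx Hy. apply functional_extensionality. intro z.
  apply propositional_extensionality. split; intros Hz; split; try apply Hz.
  - apply (eventually_vertical_equiv w y z p Hy), (boundary_class_vertical w x z p Hx Hz).
  - apply (eventually_vertical_equiv w x z p Hx), (boundary_class_vertical w y z p Hy Hz).
Qed.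

Lemma boundary_point_vertical w (xi : boundary cluster_space w) :
  exists x p, eventually_vertical x p /\ proj1_sig xi = boundary_class cluster_space w x.
Proof.
  destruct xi as [C (x & Hx & ->)]. destruct (converges_eventually_vertical w x Hx) as [p Hp].
  exists x, p. split; auto.
Qed.

Lemma boundary_point_isolated w (xi : boundary cluster_space w) :
  exists r, forall eta, boundary_close cluster_space w xi eta r -> eta = xi.
Proof.
  destruct (boundary_point_vertical w xi) as (x & p & Hx & Exi).
  destruct (abscissa_separation w p (proj1 Hx)) as [K HK].
  exists K. intros eta (x' & y' & Hx' & Hy' & Hclose).
  destruct (boundary_point_vertical w eta) as (y & q & Hy & Eeta).
  rewrite Exi in Hx'. rewrite Eeta in Hy'.
  apply (boundary_class_vertical w x x' p Hx) in Hx'.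
  apply (boundary_class_vertical w y y' q Hy) in Hy'.
  rewrite (HK x' y' q Hx' Hy' Hclose) in Hy.
  apply eq_sig_hprop; [intros; apply proof_irrelevance|].
  rewrite Eeta, Exi. apply (boundary_class_eq w y x p); auto.
Qed.

Lemma boundary_all_open w (U : boundary cluster_space w -> Prop) :
  boundary_open cluster_space w U.
Proof.
  intros xi Hxi. destruct (boundary_point_isolated w xi) as [r Hr].
  exists r. intros eta He. rewrite (Hr eta He). exact Hxi.
Qed.

Section DiscreteDimension.
Variable Z : Type.

Fixpoint disjointify (l : list (Z -> Prop)) : list (Z -> Prop) :=
  match l with
  | [] => []
  | A :: l' => A :: map (fun B z => B z /\ ~ A z) (disjointify l')
  end.

Lemma disjointify_cover l z :
  (exists A, In A l /\ A z) -> exists B, In B (disjointify l) /\ B z.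
Proof.
  induction l as [|A l IH]; intros (A' & HA & Hz); [destruct HA|].
  destruct (classic (A z)).
  - exists A. split; [left|]; auto.
  - destruct HA as [<-|HA]; [contradiction|].
    destruct IH as (B & HB & HBz); [eauto|].
    exists (fun z => B z /\ ~ A z). split; [right; apply in_map_iff; eauto|auto].
Qed.

Lemma disjointify_refines l B :
  In B (disjointify l) -> exists A, In A l /\ forall z, B z -> A z.
Proof.
  revert B; induction l as [|A l IH]; simpl; [tauto|]. intros B [<-|HB].
  - exists A. split; auto.
  - apply in_map_iff in HB. destruct HB as (B' & <- & HB').
    destruct (IH B' HB') as (A' & HA' & Hs). exists A'. split; auto.
    intros z [Hz _]; auto.
Qed.

Lemma disjointify_disjoint l B1 B2 z :
  In B1 (disjointify l) -> In B2 (disjointify l) -> B1 z -> B2 z -> B1 = B2.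
Proof.
  revert B1 B2. induction l as [|A l IH]; simpl; [tauto|]. intros B1 B2 H1 H2 z1 z2.
  destruct H1 as [<-|H1]; destruct H2 as [<-|H2]; auto.
  - apply in_map_iff in H2. destruct H2 as (B' & <- & _). destruct z2; contradiction.
  - apply in_map_iff in H1. destruct H1 as (B' & <- & _). destruct z1; contradiction.
  - apply in_map_iff in H1. destruct H1 as (B1' & <- & H1).
    apply in_map_iff in H2. destruct H2 as (B2' & <- & H2).
    destruct z1, z2. rewrite (IH B1' B2'); auto.
Qed.

Lemma covdim_le0_of_all_open (op : (Z -> Prop) -> Prop) :
  (forall U, op U) -> covdim_le Z op 0.
Proof.
  intros Hop cov _ Hcov. exists (disjointify cov). split; [|split; [|split]].
  - apply Forall_forall; auto.
  - intro z. apply disjointify_cover; auto.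
  - intros B HB. apply disjointify_refines; auto.
  - intros z l Hnd Hlen Hin.
    destruct l as [|B1 [|B2 [|]]]; simpl in Hlen; try discriminate.
    destruct (classic (B1 z)) as [h1|h1]; [|exists B1; split; [left|]; auto].
    destruct (classic (B2 z)) as [h2|h2]; [|exists B2; split; [right; left|]; auto].
    exfalso. inversion Hnd as [|? ? Hnotin _]; subst. apply Hnotin. left. symmetry.
    apply (disjointify_disjoint cov B1 B2 z); auto; apply Hin; simpl; auto.
Qed.

End DiscreteDimension.

Lemma boundary_inhabited w : inhabited (boundary cluster_space w).
Proof.
  set (x := fun i : nat => vertical_ray 3 cluster_point_3 (INR i + 1)).
  assert (Hx : eventually_vertical x 3).
  { split; [apply cluster_point_3|split].
    - exists 0%nat. intros i _. apply vertical_ray_px. pose proof (pos_INR i); lra.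
    - intros eps He. destruct (INR_unbounded (- ln eps)) as [N HN].
      exists N. intros i Hi. unfold x.
      rewrite vertical_ray_ph by (pose proof (pos_INR i); lra).
      apply le_INR in Hi. rewrite <- (exp_ln eps) by auto. apply exp_le_exp. lra. }
  constructor. exists (boundary_class cluster_space w x). exists x.
  split; [apply (eventually_vertical_converges w x 3 Hx)|reflexivity].
Qed.

Lemma cluster_space_boundary_dim w :
  covdim_eq (boundary cluster_space w) (boundary_open cluster_space w) 0.
Proof.
  split; [apply covdim_le0_of_all_open, boundary_all_open|apply boundary_inhabited].
Qed.

(** * Sperner's lemma on a triangulated grid *)

Inductive color := C1 | C2 | C3.

Definition door (a b : color) : bool :=
  match a, b with C1, C2 | C2, C1 => true | _, _ => false end.

Definition rainbow (a b c : color) : bool :=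
  match a, b, c with
  | C1, C2, C3 | C1, C3, C2 | C2, C1, C3 | C2, C3, C1 | C3, C1, C2 | C3, C2, C1 => true
  | _, _, _ => false
  end.

Definition two_colored (a : color) : Prop := a = C1 \/ a = C2.

Lemma square_rainbow_parity a b c d :
  xorb (rainbow a b d) (rainbow a c d) =
  xorb (xorb (door a b) (door c d)) (xorb (door a c) (door b d)).
Proof. destruct a, b, c, d; reflexivity. Qed.

Section Sperner.
Local Open Scope nat_scope.

Fixpoint xorsum (f : nat -> bool) (n : nat) : bool :=
  match n with 0 => false | S n => xorb (xorsum f n) (f n) end.

Lemma xorsum_ext f g n : (forall i, i < n -> f i = g i) -> xorsum f n = xorsum g n.
Proof. induction n; simpl; intros; auto. rewrite IHn, H; auto. Qed.

Lemma xorsum_xorb f g n :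
  xorsum (fun i => xorb (f i) (g i)) n = xorb (xorsum f n) (xorsum g n).
Proof.
  induction n; simpl; auto. rewrite IHn.
  destruct (xorsum f n), (xorsum g n), (f n), (g n); reflexivity.
Qed.

Lemma xorsum_telescope f n : xorsum (fun i => xorb (f i) (f (S i))) n = xorb (f 0) (f n).
Proof.
  induction n; simpl; [destruct (f 0); auto|].
  rewrite IHn. destruct (f 0), (f n), (f (S n)); reflexivity.
Qed.

Lemma xorsum_false f n : (forall i, i < n -> f i = false) -> xorsum f n = false.
Proof. induction n; simpl; intros; auto. rewrite IHn, H; auto. Qed.

Lemma xorsum_true f n : xorsum f n = true -> exists i, i < n /\ f i = true.
Proof.
  induction n; simpl; intros H; [discriminate|].
  destruct (f n) eqn:E; [exists n; auto|].
  rewrite xorb_false_r in H. destruct (IHn H) as (i & Hi & Hf). exists i; auto.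
Qed.

(* Along a two-coloured path the doors are exactly the colour changes. *)
Lemma path_doors (f : nat -> color) n : (forall i, i <= n -> two_colored (f i)) ->
  xorsum (fun i => door (f i) (f (S i))) n = xorb (door (f 0) C1) (door (f n) C1).
Proof.
  intro H. rewrite (xorsum_ext _ (fun i => xorb (door (f i) C1) (door (f (S i)) C1))).
  - apply (xorsum_telescope (fun i => door (f i) C1)).
  - intros i Hi. destruct (H i ltac:(lia)) as [-> | ->], (H (S i) ltac:(lia)) as [-> | ->];
      reflexivity.
Qed.

Variable c : nat -> nat -> color.
Variables W J h : nat.
Hypothesis h_le_W : h <= W.
Hypothesis bottom_left_not1 : forall i, i <= h -> c i 0 <> C1.
Hypothesis bottom_right_not2 : forall i, h <= i -> i <= W -> c i 0 <> C2.
Hypothesis left_two_colored : forall k, k <= J -> two_colored (c 0 k).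
Hypothesis right_two_colored : forall k, k <= J -> two_colored (c W k).
Hypothesis top_two_colored : forall i, i <= W -> two_colored (c i J).
Hypothesis corner_left : c 0 0 = C2.
Hypothesis corner_right : c W 0 = C1.

Lemma bottom_doors : xorsum (fun i => door (c i 0) (c (S i) 0)) W = false.
Proof.
  apply xorsum_false. intros i Hi.
  destruct (le_lt_dec (S i) h).
  - pose proof (bottom_left_not1 i ltac:(lia)); pose proof (bottom_left_not1 (S i) l).
    destruct (c i 0), (c (S i) 0); try reflexivity; congruence.
  - pose proof (bottom_right_not2 (S i) ltac:(lia) ltac:(lia)).
    pose proof (bottom_right_not2 i ltac:(lia) ltac:(lia)).
    destruct (c i 0), (c (S i) 0); try reflexivity; congruence.
Qed.

(* Each square contributes the parity of its rainbow triangles; summing over the grid,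
   interior doors cancel and only the boundary doors remain, of which there is an odd
   number. *)
Lemma sperner : exists i k, i < W /\ k < J /\
  (rainbow (c i k) (c (S i) k) (c (S i) (S k)) = true \/
   rainbow (c i k) (c i (S k)) (c (S i) (S k)) = true).
Proof.
  set (Dh := fun i k => door (c i k) (c (S i) k)).
  set (Dv := fun i k => door (c i k) (c i (S k))).
  set (rb := fun i k => xorb (rainbow (c i k) (c (S i) k) (c (S i) (S k)))
                             (rainbow (c i k) (c i (S k)) (c (S i) (S k)))).
  assert (Hrow : forall i, xorsum (rb i) J =
    xorb (xorb (Dh i 0) (Dh i J)) (xorb (xorsum (Dv i) J) (xorsum (Dv (S i)) J))).
  { intro i. rewrite (xorsum_ext _ (fun k => xorb (xorb (Dh i k) (Dh i (S k)))
                                               (xorb (Dv i k) (Dv (S i) k)))).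
    - rewrite xorsum_xorb, (xorsum_telescope (Dh i)), xorsum_xorb. reflexivity.
    - intros k _. unfold rb, Dh, Dv. rewrite square_rainbow_parity.
      destruct (door (c i k) (c i (S k))), (door (c (S i) k) (c (S i) (S k))),
        (door (c i k) (c (S i) k)), (door (c i (S k)) (c (S i) (S k))); reflexivity. }
  assert (Htotal : xorsum (fun i => xorsum (rb i) J) W = true).
  { rewrite (xorsum_ext _ _ _ (fun i _ => Hrow i)), xorsum_xorb.
    rewrite (xorsum_telescope (fun i => xorsum (Dv i) J)), xorsum_xorb.
    unfold Dh at 1. rewrite bottom_doors.
    unfold Dh. rewrite (path_doors (fun i => c i J) W) by (intros; apply top_two_colored; lia).
    unfold Dv. rewrite (path_doors (fun k => c 0 k) J) by (intros; apply left_two_colored; lia).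
    rewrite (path_doors (fun k => c W k) J) by (intros; apply right_two_colored; lia).
    simpl. rewrite corner_left, corner_right.
    destruct (door (c 0 J) C1), (door (c W J) C1); reflexivity. }
  apply xorsum_true in Htotal. destruct Htotal as (i & Hi & Hk).
  apply xorsum_true in Hk. destruct Hk as (k & Hk & Hb).
  exists i, k. split; auto. split; auto. unfold rb in Hb.
  destruct (rainbow _ _ _), (rainbow _ _ _); simpl in Hb; auto; discriminate.
Qed.

End Sperner.

Lemma rainbow_distinct a b c : rainbow a b c = true -> a <> b /\ b <> c /\ a <> c.
Proof. destruct a, b, c; simpl; intro H; try discriminate; repeat split; discriminate. Qed.

(** * A lower bound for the asymptotic dimension *)

Record far_sided_grid (Y : MetricSpace) (r sep : R) (g : nat -> nat -> Y) (W J h : nat)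
  : Prop := {
  grid_split : (h <= W)%nat;
  grid_edge_h : forall i k, (i < W)%nat -> (k <= J)%nat -> dist (g i k) (g (S i) k) <= r;
  grid_edge_v : forall i k, (i <= W)%nat -> (k < J)%nat -> dist (g i k) (g i (S k)) <= r;
  grid_edge_d : forall i k, (i < W)%nat -> (k < J)%nat ->
    dist (g i k) (g (S i) (S k)) <= r;
  grid_far_right : forall i k, (i <= h)%nat -> (k <= J)%nat -> sep <= dist (g i 0%nat) (g W k);
  grid_far_left : forall i k, (h <= i <= W)%nat -> (k <= J)%nat ->
    sep <= dist (g i 0%nat) (g 0%nat k);
  grid_far_top : forall i i', (i <= h)%nat -> (i' <= W)%nat -> sep <= dist (g i 0%nat) (g i' J)
}.

Section GridObstruction.
Variables (Y : MetricSpace) (r sep Dm : R) (g : nat -> nat -> Y) (W J h : nat).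
Hypothesis Hg : far_sided_grid Y r sep g W J h.
Hypothesis r_nonneg : 0 <= r.
Hypothesis Dm_lt_sep : Dm < sep.
Variable U : (Y -> Prop) -> Prop.
Hypothesis U_cover : forall y, exists A, U A /\ A y.
Hypothesis U_bounded : forall A, U A -> forall x y, A x -> A y -> dist x y <= Dm.
Hypothesis U_mult : forall x l, NoDup l -> length l = 3%nat -> (forall A, In A l -> U A) ->
  exists A, In A l /\ ~ (exists y, closed_ball Y x r y /\ A y).

Definition member (y : Y) : Y -> Prop :=
  proj1_sig (constructive_indefinite_description _ (U_cover y)).

Lemma member_spec y : U (member y) /\ member y y.
Proof. exact (proj2_sig (constructive_indefinite_description _ (U_cover y))). Qed.

Lemma no_three_members_meet_ball x A1 A2 A3 y1 y2 y3 :
  U A1 -> U A2 -> U A3 -> A1 <> A2 -> A2 <> A3 -> A1 <> A3 ->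
  A1 y1 -> A2 y2 -> A3 y3 -> dist x y1 <= r -> dist x y2 <= r -> dist x y3 <= r -> False.
Proof.
  intros. destruct (U_mult x [A1; A2; A3]) as (A & HA & Hmiss).
  - repeat constructor; simpl; intuition.
  - reflexivity.
  - simpl; intros A [<-|[<-|[<-|[]]]]; auto.
  - simpl in HA. destruct HA as [<-|[<-|[<-|[]]]]; apply Hmiss; eauto.
Qed.

Let meets (A S : Y -> Prop) := exists y, A y /\ S y.
Let bottom_left y := exists i, (i <= h)%nat /\ y = g i 0%nat.
Let bottom_right y := exists i, (h <= i <= W)%nat /\ y = g i 0%nat.
Let other_sides y := (exists k, (k <= J)%nat /\ (y = g 0%nat k \/ y = g W k)) \/
                     (exists i, (i <= W)%nat /\ y = g i J).

Lemma member_misses_a_side A : U A ->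
  meets A bottom_left -> meets A bottom_right -> meets A other_sides -> False.
Proof.
  intros HU (p & Ap & i & Hi & ->) (q & Aq & i' & Hi' & ->) (s & As & Hs).
  destruct Hs as [(k & Hk & [-> | ->]) | (i'' & Hi'' & ->)].
  - pose proof (U_bounded A HU _ _ Aq As). pose proof (grid_far_left _ _ _ _ _ _ _ Hg i' k Hi' Hk).
    lra.
  - pose proof (U_bounded A HU _ _ Ap As). pose proof (grid_far_right _ _ _ _ _ _ _ Hg i k Hi Hk).
    lra.
  - pose proof (U_bounded A HU _ _ Ap As).
    pose proof (grid_far_top _ _ _ _ _ _ _ Hg i i'' Hi Hi''). lra.
Qed.

Definition side_color (A : Y -> Prop) : color :=
  if excluded_middle_informative (meets A bottom_left) then
    (if excluded_middle_informative (meets A bottom_right) then C3 else C2)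
  else C1.

Lemma side_color_not1 A : meets A bottom_left -> side_color A <> C1.
Proof.
  intro H. unfold side_color.
  destruct (excluded_middle_informative (meets A bottom_left)); [|contradiction].
  destruct (excluded_middle_informative _); discriminate.
Qed.

Lemma side_color_not2 A : meets A bottom_right -> side_color A <> C2.
Proof.
  intro H. unfold side_color.
  destruct (excluded_middle_informative (meets A bottom_left)); [|discriminate].
  destruct (excluded_middle_informative _); [discriminate|contradiction].
Qed.

Lemma side_color_two_colored A : U A -> meets A other_sides -> two_colored (side_color A).
Proof.
  intros HU HC. unfold side_color, two_colored.
  destruct (excluded_middle_informative (meets A bottom_left)); [|auto].
  destruct (excluded_middle_informative (meets A bottom_right)); [|auto].
  exfalso; eauto using member_misses_a_side.
Qed.

Let c i k := side_color (member (g i k)).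

Lemma member_meets y S : S y -> meets (member y) S.
Proof. intro Hy. exists y. split; [apply member_spec|exact Hy]. Qed.

Lemma grid_color_two_colored i k : other_sides (g i k) -> two_colored (c i k).
Proof. intro H. apply side_color_two_colored; [apply member_spec|apply member_meets, H]. Qed.

Lemma member_neq_of_color_neq y y' :
  side_color (member y) <> side_color (member y') -> member y <> member y'.
Proof. congruence. Qed.

Lemma grid_obstruction : False.
Proof.
  assert (Hdist0 : forall y : Y, dist y y <= r).
  { intro y. rewrite (proj2 (dist_eq0 Y y y) eq_refl). exact r_nonneg. }
  pose proof (grid_split _ _ _ _ _ _ _ Hg) as HhW.
  destruct (sperner c W J h) as (i & k & Hi & Hk & Hrb).
  - exact HhW.
  - intros i Hi. apply side_color_not1, member_meets. exists i; auto.
  - intros i Hi Hi'. apply side_color_not2, member_meets. exists i; auto.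
  - intros k Hk. apply grid_color_two_colored. left. exists k; auto.
  - intros k Hk. apply grid_color_two_colored. left. exists k; auto.
  - intros i Hi. apply grid_color_two_colored. right. exists i; auto.
  - assert (Hc : two_colored (c 0 0))
      by (apply grid_color_two_colored; left; exists 0%nat; split; [lia|auto]).
    destruct Hc as [Hc|Hc]; [exfalso; revert Hc|exact Hc].
    apply side_color_not1, member_meets. exists 0%nat. split; [lia|auto].
  - assert (Hc : two_colored (c W 0))
      by (apply grid_color_two_colored; left; exists 0%nat; split; [lia|auto]).
    destruct Hc as [Hc|Hc]; [exact Hc|exfalso; revert Hc].
    apply side_color_not2, member_meets. exists W. split; [lia|auto].
  - destruct Hrb as [Hrb|Hrb]; apply rainbow_distinct in Hrb; destruct Hrb as (N1 & N2 & N3).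
    + apply (no_three_members_meet_ball (g i k) (member (g i k)) (member (g (S i) k))
        (member (g (S i) (S k))) (g i k) (g (S i) k) (g (S i) (S k)));
        try apply member_spec; try (apply member_neq_of_color_neq; assumption).
      * apply Hdist0.
      * apply (grid_edge_h _ _ _ _ _ _ _ Hg); lia.
      * apply (grid_edge_d _ _ _ _ _ _ _ Hg); lia.
    + apply (no_three_members_meet_ball (g i k) (member (g i k)) (member (g i (S k)))
        (member (g (S i) (S k))) (g i k) (g i (S k)) (g (S i) (S k)));
        try apply member_spec; try (apply member_neq_of_color_neq; assumption).
      * apply Hdist0.
      * apply (grid_edge_v _ _ _ _ _ _ _ Hg); lia.
      * apply (grid_edge_d _ _ _ _ _ _ _ Hg); lia.
Qed.

End GridObstruction.

Lemma not_asdim_le1_of_grids (Y : MetricSpace) (r : R) : 0 < r ->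
  (forall Dm, exists sep g W J h, Dm < sep /\ far_sided_grid Y r sep g W J h) ->
  ~ asdim_le Y 1.
Proof.
  intros Hr Hgrids Hasdim. destruct (Hasdim r Hr) as (U & Hcov & [Dm Hbd] & Hmult).
  destruct (Hgrids Dm) as (sep & g & W & J & h & Hsep & Hg).
  exact (grid_obstruction Y r sep Dm g W J h Hg ltac:(lra) Hsep U Hcov Hbd Hmult).
Qed.

Definition grid_width (m : nat) : nat := (2 ^ S m)%nat.
Definition grid_scale (m : nat) : R := INR (grid_width m).

Lemma grid_scale_pow m : grid_scale m = 2 ^ S m.
Proof. unfold grid_scale, grid_width. rewrite pow_INR. reflexivity. Qed.

Lemma grid_scale_ge2 m : 2 <= grid_scale m.
Proof. rewrite grid_scale_pow. simpl. pose proof (pow_R1_Rle 2 m ltac:(lra)). lra. Qed.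

(* The grid sits over the cluster of index [grid_width m]: columns are its points and
   rows are the heights [2 ^ k / grid_scale m ^ 2], [k <= S m]; the [Nat.min]s only keep
   every index admissible. *)
Definition grid_x (m i : nat) : R :=
  3 * INR (grid_width m) + INR (Nat.min i (grid_width m))
                           / (INR (grid_width m) * INR (grid_width m)).

Definition grid_h (m k : nat) : R := 2 ^ (Nat.min k (S m)) / (grid_scale m * grid_scale m).

Lemma grid_x_cluster m i : cluster_point (grid_x m i).
Proof.
  exists (grid_width m), (Nat.min i (grid_width m)). split; [|split; [lia|reflexivity]].
  unfold grid_width. pose proof (Nat.pow_nonzero 2 (S m) ltac:(lia)). lia.
Qed.

Lemma grid_h_bounds m k : 0 < grid_h m k < 1.
Proof.
  unfold grid_h. pose proof (grid_scale_ge2 m). split.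
  - apply Rdiv_lt_0_compat; [apply pow_lt; lra|nra].
  - apply Rmult_lt_reg_r with (grid_scale m * grid_scale m); [nra|].
    unfold Rdiv. rewrite Rmult_assoc, Rinv_l, Rmult_1_l, Rmult_1_r by nra.
    assert (2 ^ Nat.min k (S m) <= grid_scale m)
      by (rewrite grid_scale_pow; apply Rle_pow; [lra|lia]).
    nra.
Qed.

Definition grid_pt (m i k : nat) : pt :=
  mkpt (grid_x m i) (grid_h m k) (or_introl (conj (grid_x_cluster m i) (grid_h_bounds m k))).

Lemma grid_h_val m k : (k <= S m)%nat -> grid_h m k = 2 ^ k / (grid_scale m * grid_scale m).
Proof. intro H. unfold grid_h. rewrite Nat.min_l by lia. reflexivity. Qed.

Lemma grid_h_ge m k : 1 / (grid_scale m * grid_scale m) <= grid_h m k.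
Proof.
  unfold grid_h. pose proof (grid_scale_ge2 m).
  unfold Rdiv. apply Rmult_le_compat_r; [left; apply Rinv_0_lt_compat; nra|].
  apply pow_R1_Rle; lra.
Qed.

Lemma grid_h_succ m k : (S k <= S m)%nat -> grid_h m (S k) = 2 * grid_h m k.
Proof.
  intro H. rewrite !grid_h_val by lia. simpl. field.
  pose proof (grid_scale_ge2 m). nra.
Qed.

Lemma grid_x_gap m i j : (i <= grid_width m)%nat -> (j <= grid_width m)%nat ->
  Rabs (grid_x m i - grid_x m j) = Rabs (INR i - INR j) / (grid_scale m * grid_scale m).
Proof.
  intros Hi Hj. unfold grid_x. rewrite !Nat.min_l by lia. fold (grid_scale m).
  pose proof (grid_scale_ge2 m).
  replace (3 * grid_scale m + INR i / (grid_scale m * grid_scale m)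
           - (3 * grid_scale m + INR j / (grid_scale m * grid_scale m)))
    with ((INR i - INR j) * / (grid_scale m * grid_scale m)) by (field; nra).
  rewrite Rabs_mult, (Rabs_right (/ _)); [reflexivity|].
  left; apply Rinv_0_lt_compat; nra.
Qed.

Lemma grid_x_step m i : (S i <= grid_width m)%nat ->
  Rabs (grid_x m i - grid_x m (S i)) = 1 / (grid_scale m * grid_scale m).
Proof.
  intro Hi. rewrite grid_x_gap, S_INR by lia.
  replace (INR i - (INR i + 1)) with (Ropp 1) by ring. rewrite Rabs_Ropp, Rabs_R1. reflexivity.
Qed.

Lemma grid_gap_dist m i i' k :
  (i <= grid_width m)%nat -> (i' <= grid_width m)%nat -> (k <= S m)%nat ->
  2 ^ m <= Rabs (INR i - INR i') ->
  INR m * ln 2 <= pt_dist (grid_pt m i 0) (grid_pt m i' k).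
Proof.
  intros Hi Hi' Hk Hgap. pose proof (grid_scale_ge2 m) as Hs.
  assert (Hsq : 0 < grid_scale m * grid_scale m) by nra.
  assert (Hp : 0 < 2 ^ m) by (apply pow_lt; lra).
  assert (Hs2 : grid_scale m = 2 * 2 ^ m) by (rewrite grid_scale_pow; reflexivity).
  pose proof (pt_dist_ge_abscissa_gap (grid_pt m i 0) (grid_pt m i' k)
    (2 ^ m / (grid_scale m * grid_scale m))) as Hlb.
  simpl in Hlb. rewrite grid_x_gap, grid_h_val in Hlb by lia.
  rewrite !ln_div, pow_O, ln_1, ln_pow in Hlb by lra.
  eapply Rle_trans; [|apply Hlb].
  - lra.
  - apply Rdiv_lt_0_compat; lra.
  - unfold Rdiv. apply Rmult_le_compat_r; [left; apply Rinv_0_lt_compat|]; lra.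
  - apply Rmult_le_reg_r with (grid_scale m * grid_scale m); [lra|].
    unfold Rdiv. rewrite Rmult_assoc, Rinv_l by lra. rewrite Hs2. nra.
Qed.

Lemma grid_far_sided m :
  far_sided_grid cluster_space 3 (INR m * ln 2) (grid_pt m) (grid_width m) (S m) (2 ^ m).
Proof.
  pose proof (grid_scale_ge2 m).
  split; change (dist ?a ?b) with (pt_dist a b).
  - unfold grid_width. simpl. lia.
  - intros i k Hi Hk. pose proof (grid_h_bounds m k).
    apply pt_dist_le3_of_adjacent; simpl; [|lra|lra].
    rewrite grid_x_step, Rmin_left by (lia || lra). apply grid_h_ge.
  - intros i k Hi Hk. pose proof (grid_h_bounds m k).
    apply pt_dist_le3_of_adjacent; simpl; rewrite ?grid_h_succ by lia; [|lra|lra].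
    rewrite Rminus_diag, Rabs_R0. apply Rmin_glb; lra.
  - intros i k Hi Hk. pose proof (grid_h_bounds m k).
    apply pt_dist_le3_of_adjacent; simpl; rewrite ?grid_h_succ by lia; [|lra|lra].
    rewrite grid_x_step, Rmin_left by (lia || lra). apply grid_h_ge.
  - intros i k Hi Hk. apply grid_gap_dist; try (unfold grid_width in *; simpl in *; lia).
    rewrite Rabs_left1; [|apply Rle_minus, le_INR; unfold grid_width; simpl; lia].
    fold (grid_scale m). rewrite grid_scale_pow. apply le_INR in Hi.
    rewrite pow_INR in Hi. change (INR 2) with 2 in Hi. simpl. lra.
  - intros i k Hi Hk. apply grid_gap_dist; try (unfold grid_width in *; simpl in *; lia).
    change (INR 0) with 0. rewrite Rminus_0_r, Rabs_right by (apply Rle_ge, pos_INR).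
    apply proj1, le_INR in Hi. rewrite pow_INR in Hi. change (INR 2) with 2 in Hi. lra.
  - intros i i' Hi Hi'.
    pose proof (pt_dist_ge_height_ratio (grid_pt m i 0) (grid_pt m i' (S m))) as Hlb.
    assert (0 < grid_scale m * grid_scale m) by nra.
    pose proof (pow_lt 2 (S m) ltac:(lra)). pose proof ln2_pos.
    simpl in Hlb. rewrite !grid_h_val, !ln_div, pow_O, ln_1, ln_pow, S_INR in Hlb by (lia || lra).
    lra.
Qed.

Lemma cluster_space_not_asdim_le1 : ~ asdim_le cluster_space 1.
Proof.
  apply (not_asdim_le1_of_grids cluster_space 3); [lra|]. intro Dm.
  destruct (INR_unbounded (Dm / ln 2)) as [m Hm].
  pose proof ln2_pos.
  exists (INR m * ln 2), (grid_pt m), (grid_width m), (S m), (2 ^ m)%nat.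
  split; [|apply grid_far_sided].
  apply Rmult_lt_reg_r with (/ ln 2); [apply Rinv_0_lt_compat; lra|].
  rewrite Rmult_assoc, Rinv_r, Rmult_1_r by lra. exact Hm.
Qed.

(** * An upper bound for the asymptotic dimension *)

Lemma asdim_le_of_keys (Y : MetricSpace) (K : Type) (n : nat) :
  (forall d, 0 < d -> exists (key : Y -> K) (Dm : R),
     (forall x y, key x = key y -> dist x y <= Dm) /\
     (forall x, exists ks, length ks = S n /\
        forall y, closed_ball Y x d y -> In (key y) ks)) ->
  asdim_le Y n.
Proof.
  intros H d Hd. destruct (H d Hd) as (key & Dm & Hbd & Hball).
  exists (fun A => exists k, A = fun y => key y = k). split; [|split].
  - intro x. exists (fun y => key y = key x). split; [eauto|reflexivity].
  - exists Dm. intros A [k ->] x y Hx Hy. apply Hbd. congruence.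
  - intros x l Hnd Hlen Hin. destruct (Hball x) as (ks & Hks & Hx).
    apply NNPP. intro Hall.
    assert (Hincl : incl l (map (fun k y => key y = k) ks)).
    { intros A HA. destruct (Hin A HA) as [k ->].
      destruct (classic (exists y, closed_ball Y x d y /\ key y = k)) as [(y & Hy & <-)|Hno].
      - apply (in_map (fun k y => key y = k)), Hx, Hy.
      - exfalso. apply Hall. exists (fun y => key y = k). split; auto. }
    pose proof (NoDup_incl_length Hnd Hincl) as Hle.
    rewrite length_map in Hle. lia.
Qed.

Lemma Int_part_bounds r : IZR (Int_part r) <= r < IZR (Int_part r) + 1.
Proof. destruct (base_Int_part r). lra. Qed.

Lemma Int_part_le r t : r <= t -> (Int_part r <= Int_part t)%Z.
Proof.
  intro H. destruct (Int_part_bounds r), (Int_part_bounds t).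
  assert (Int_part r < Int_part t + 1)%Z by (apply lt_IZR; rewrite plus_IZR; simpl; lra).
  lia.
Qed.

Lemma Int_part_nonneg r : 0 <= r -> (0 <= Int_part r)%Z.
Proof.
  intro H. rewrite (Int_part_spec 0 0%Z) by (simpl; lra). apply Int_part_le, H.
Qed.

Lemma Int_part_step a t : a <= t -> t < a + 1 ->
  Int_part t = Int_part a \/ (Int_part t = (Int_part a + 1)%Z /\ a < IZR (Int_part t)).
Proof.
  intros H1 H2. pose proof (Int_part_le _ _ H1).
  destruct (Int_part_bounds a), (Int_part_bounds t).
  assert (Int_part t < Int_part a + 2)%Z by (apply lt_IZR; rewrite plus_IZR; simpl; lra).
  destruct (Z.eq_dec (Int_part t) (Int_part a)) as [E|E]; [left; exact E|right].
  split; [lia|]. assert (IZR (Int_part a + 1) <= IZR (Int_part t)) by (apply IZR_le; lia).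
  rewrite plus_IZR in H7. simpl in H7. lra.
Qed.

Lemma Int_part_div_bounds s L : 0 < L ->
  IZR (Int_part (s / L)) * L <= s < (IZR (Int_part (s / L)) + 1) * L.
Proof.
  intro HL. destruct (Int_part_bounds (s / L)) as [H1 H2].
  replace s with (s / L * L) at 2 3 by (field; lra).
  split; [apply Rmult_le_compat_r|apply Rmult_lt_compat_r]; lra.
Qed.

Lemma half_integer_abs (N : Z) : 1/2 <= Rabs (IZR N + 1/2).
Proof.
  destruct (Z_le_gt_dec 0 N) as [H|H].
  - apply IZR_le in H. rewrite Rabs_right by lra. lra.
  - assert (H' : (N <= -1)%Z) by lia. apply IZR_le in H'. rewrite Rabs_left by lra. lra.
Qed.

Definition depth (x : pt) : R := - ln (ph x).

Lemma depth_nonneg x : 0 <= depth x.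
Proof. unfold depth. pose proof (ln_ph_nonpos x). lra. Qed.

Lemma ph_exp_depth x : ph x = exp (- depth x).
Proof. unfold depth. rewrite Ropp_involutive, exp_ln; [reflexivity|apply ph_pos]. Qed.

Lemma depth_gap_le_pt_dist x y : Rabs (depth x - depth y) <= pt_dist x y.
Proof.
  pose proof (pt_dist_ge_height_ratio x y). pose proof (pt_dist_ge_height_ratio y x).
  rewrite pt_dist_sym in H0. unfold depth. apply Rabs_le. lra.
Qed.

Lemma abscissa_gap_le x y d : 0 < d -> pt_dist x y <= d -> 2 * d < depth y ->
  Rabs (px x - px y) <= exp d * ph x.
Proof.
  intros Hd H Hy. pose proof (depth_gap_le_pt_dist x y) as H1. apply Rabs_le_between in H1.
  pose proof (ln_ph_nonpos x). unfold depth in *.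
  assert (HN : join_height x y < 1).
  { destruct (Rlt_dec (join_height x y) 1); auto. exfalso.
    assert (join_height x y = 1) by (pose proof (join_height_le1 x y); lra).
    unfold pt_dist in H. rewrite H2, ln_1 in H. lra. }
  eapply Rle_trans; [apply join_height_lt1_abscissa; auto|].
  rewrite <- (exp_ln (ph x)) by apply ph_pos. rewrite <- exp_plus.
  rewrite <- (exp_ln (join_height x y)) by apply join_height_pos. apply exp_le_exp.
  unfold pt_dist in *. lra.
Qed.

Lemma Int_part_eq_close a b W c : 0 < W ->
  Int_part (a / W - c) = Int_part (b / W - c) -> Rabs (a - b) < W.
Proof.
  intros HW E. destruct (Int_part_bounds (a / W - c)), (Int_part_bounds (b / W - c)).
  rewrite E in *.
  replace (a - b) with ((a / W - c - (b / W - c)) * W) by (field; lra).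
  rewrite Rabs_mult, (Rabs_right W) by lra.
  assert (Rabs (a / W - c - (b / W - c)) < 1) by (apply Rabs_def1; lra). nra.
Qed.

Lemma Int_part_window W p0 p rho : 0 < W -> 2 * rho < W -> Rabs (p - p0) <= rho ->
  Int_part (p / W - 1/2) = Int_part ((p0 - rho) / W - 1/2) \/
  (Int_part (p / W - 1/2) = (Int_part ((p0 - rho) / W - 1/2) + 1)%Z /\
   p0 - rho < (IZR (Int_part (p / W - 1/2)) + 1/2) * W <= p0 + rho).
Proof.
  intros HW Hr Hp. apply Rabs_le_between in Hp.
  assert (HWinv : 0 < / W) by (apply Rinv_0_lt_compat; lra).
  destruct (Int_part_step ((p0 - rho) / W - 1/2) (p / W - 1/2)) as [E|[E Hlt]].
  - unfold Rdiv. apply Rplus_le_compat_r, Rmult_le_compat_r; lra.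
  - replace ((p0 - rho) / W - 1/2 + 1) with ((p0 - rho + W) / W - 1/2) by (field; lra).
    unfold Rdiv. apply Rplus_lt_compat_r, Rmult_lt_compat_r; lra.
  - left. exact E.
  - right. split; [exact E|].
    destruct (Int_part_bounds (p / W - 1/2)) as [Hle _].
    set (z := IZR (Int_part (p / W - 1/2))) in *.
    assert ((p0 - rho) / W * W = p0 - rho) by (field; lra).
    assert (p / W * W = p) by (field; lra).
    split; nra.
Qed.

Section Bricks.
Variable d : R.
Hypothesis d_pos : 0 < d.
Variable q : nat.
Hypothesis q_large : exp (2 * d) < 2 * INR q.

Definition brick_ratio : R := 2 * INR q.
Definition band_height : R := ln brick_ratio.
Definition brick_factor : R := 4 * exp (2 * d) + 1.
Definition brick_diameter : R := 2 * ln (brick_factor + 1) + 2 * band_height.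

Definition band (x : pt) : Z := Int_part (depth x / band_height).
Definition brick_width (j : Z) : R := brick_factor * exp (- IZR j * band_height).
Definition brick_index (x : pt) : Z := Int_part (px x / brick_width (band x) - 1/2).

(* Band [j] is cut into bricks of width [brick_width j] with walls at the half-integer
   multiples of that width.  Since the ratio of widths of consecutive bands is the even
   integer [2 q], the walls of band [j - 1] sit at integer multiples of [brick_width j],
   hence at distance at least [brick_width j / 2] from the walls of band [j]. *)
Definition brick (x : pt) : Z * Z :=
  if Z.eqb (band x) 0 then (0%Z, 0%Z) else (band x, brick_index x).

Lemma brick_ratio_ge1 : 1 <= brick_ratio.
Proof. unfold brick_ratio. pose proof (exp_ineq1_le (2 * d)). lra. Qed.

Lemma band_height_gt : 2 * d < band_height.
Proof.
  unfold band_height. rewrite <- (ln_exp (2 * d)).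
  apply ln_increasing; [apply exp_pos|exact q_large].
Qed.

Lemma exp_band_height : exp band_height = brick_ratio.
Proof. apply exp_ln. pose proof brick_ratio_ge1. lra. Qed.

Lemma band_bounds x : IZR (band x) * band_height <= depth x < (IZR (band x) + 1) * band_height.
Proof. apply Int_part_div_bounds. pose proof band_height_gt. lra. Qed.

Lemma band_nonneg x : (0 <= band x)%Z.
Proof.
  apply Int_part_nonneg. pose proof band_height_gt. pose proof (depth_nonneg x).
  unfold Rdiv. apply Rmult_le_pos; [lra|]. left; apply Rinv_0_lt_compat; lra.
Qed.

Lemma brick_factor_pos : 0 < brick_factor.
Proof. unfold brick_factor. pose proof (exp_pos (2 * d)). lra. Qed.

Lemma brick_width_pos j : 0 < brick_width j.
Proof. unfold brick_width. apply Rmult_lt_0_compat; [apply brick_factor_pos|apply exp_pos]. Qed.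

Lemma brick_width_pred j : brick_width (j - 1) = brick_ratio * brick_width j.
Proof.
  unfold brick_width. rewrite minus_IZR, <- exp_band_height.
  replace (- (IZR j - 1) * band_height) with (- IZR j * band_height + band_height) by ring.
  rewrite exp_plus. ring.
Qed.

Lemma brick_zero x : band x = 0%Z -> brick x = (0%Z, 0%Z).
Proof. intro H. unfold brick. rewrite H. reflexivity. Qed.

Lemma brick_pos x : band x <> 0%Z -> brick x = (band x, brick_index x).
Proof. intro H. unfold brick. destruct (Z.eqb_spec (band x) 0); [contradiction|reflexivity]. Qed.

Lemma brick_band x y : brick x = brick y -> band x = band y.
Proof.
  unfold brick. pose proof (band_nonneg x); pose proof (band_nonneg y).
  destruct (Z.eqb_spec (band x) 0), (Z.eqb_spec (band y) 0); intro E;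
    inversion E; lia.
Qed.

Lemma pt_dist_depths x y : pt_dist x y = 2 * ln (join_height x y) + depth x + depth y.
Proof. unfold pt_dist, depth. ring. Qed.

Lemma brick_join_height x y : brick x = brick y -> band x <> 0%Z ->
  join_height x y <= (brick_factor + 1) * exp (- IZR (band x) * band_height).
Proof.
  intros E Hb. pose proof (brick_band x y E) as Eb.
  rewrite !brick_pos in E by congruence. injection E as _ Ei.
  unfold brick_index in Ei. rewrite Eb in Ei.
  pose proof (Int_part_eq_close _ _ _ _ (brick_width_pos (band y)) Ei) as Hgap.
  unfold brick_width in Hgap. rewrite <- Eb in Hgap.
  set (e := exp (- IZR (band x) * band_height)) in *.
  pose proof (band_bounds x); pose proof (band_bounds y).
  assert (Hx : ph x <= e) by (rewrite ph_exp_depth; apply exp_le_exp; lra).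
  assert (Hy : ph y <= e) by (rewrite ph_exp_depth, <- Eb in *; apply exp_le_exp; lra).
  unfold join_height. eapply Rle_trans; [apply Rmin_l|].
  unfold Rmax; destruct (Rle_dec _ _); lra.
Qed.

Lemma brick_diameter_bound x y : brick x = brick y -> pt_dist x y <= brick_diameter.
Proof.
  intro E. pose proof (brick_band x y E) as Eb.
  pose proof (band_bounds x); pose proof (band_bounds y). rewrite Eb in *.
  pose proof band_height_gt. pose proof brick_factor_pos.
  assert (0 <= ln (brick_factor + 1)) by (rewrite <- ln_1; apply ln_le_ln; lra).
  rewrite pt_dist_depths. unfold brick_diameter.
  destruct (Z.eq_dec (band y) 0) as [E0|E0].
  - rewrite E0 in *. simpl in *.
    pose proof (ln_nonpos _ (join_height_pos x y) (join_height_le1 x y)). lra.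
  - pose proof (brick_join_height x y E ltac:(congruence)) as Hj. rewrite Eb in Hj.
    apply ln_le_ln in Hj; [|apply join_height_pos].
    rewrite ln_mult, ln_exp in Hj by (try apply exp_pos; lra). nra.
Qed.

Lemma brick_walls_apart w rho p0 z z' : 0 < w -> 4 * rho < w ->
  p0 - rho < (IZR z + 1/2) * w <= p0 + rho ->
  p0 - rho < (IZR z' + 1/2) * (brick_ratio * w) <= p0 + rho -> False.
Proof.
  intros Hw Hr H1 H2.
  assert (E : (IZR z + 1/2) * w - (IZR z' + 1/2) * (brick_ratio * w) =
              (IZR (z - 2 * Z.of_nat q * z' - Z.of_nat q) + 1/2) * w).
  { unfold brick_ratio. rewrite INR_IZR_INZ, !minus_IZR, !mult_IZR. simpl. field. }
  pose proof (half_integer_abs (z - 2 * Z.of_nat q * z' - Z.of_nat q)).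
  assert (Rabs ((IZR z + 1/2) * w - (IZR z' + 1/2) * (brick_ratio * w)) < w / 2)
    by (apply Rabs_def1; lra).
  rewrite E, Rabs_mult, (Rabs_right w) in H0 by lra. nra.
Qed.

Section Ball.
Variable x : pt.

Let top := Int_part ((depth x + d) / band_height).
Let spread := exp (2 * d - IZR top * band_height).
Let wall j := Int_part ((px x - spread) / brick_width j - 1/2).

Lemma ball_band y : pt_dist x y <= d -> (top - 1 <= band y <= top)%Z.
Proof.
  intro H. pose proof band_height_gt as HL.
  pose proof (Int_part_div_bounds (depth x + d) band_height ltac:(lra)) as Htop.
  fold top in Htop. pose proof (band_bounds y).
  pose proof (Rle_trans _ _ _ (depth_gap_le_pt_dist x y) H) as Hd.
  apply Rabs_le_between in Hd.
  assert (IZR top - 2 < IZR (band y)) by (apply Rmult_lt_reg_r with band_height; lra).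
  assert (IZR (band y) < IZR top + 1) by (apply Rmult_lt_reg_r with band_height; lra).
  assert (top - 2 < band y)%Z by (apply lt_IZR; rewrite minus_IZR; simpl; lra).
  assert (band y < top + 1)%Z by (apply lt_IZR; rewrite plus_IZR; simpl; lra).
  lia.
Qed.

Lemma ball_abscissa y : pt_dist x y <= d -> (1 <= band y)%Z -> Rabs (px y - px x) <= spread.
Proof.
  intros H Hb. pose proof band_height_gt.
  pose proof (band_bounds y). pose proof (ball_band y H).
  pose proof (Int_part_div_bounds (depth x + d) band_height ltac:(lra)). fold top in H3.
  assert (1 <= IZR (band y)) by (apply IZR_le in Hb; auto).
  rewrite Rabs_minus_sym. eapply Rle_trans; [apply (abscissa_gap_le x y d); auto; nra|].
  rewrite ph_exp_depth, <- exp_plus. apply exp_le_exp. lra.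
Qed.

Lemma spread_lt_width j : (j <= top)%Z -> 4 * spread < brick_width j.
Proof.
  intro Hj. unfold spread, brick_width, brick_factor.
  replace (2 * d - IZR top * band_height) with (2 * d + - IZR top * band_height) by ring.
  rewrite exp_plus. pose proof (exp_pos (- IZR top * band_height)). pose proof (exp_pos (2 * d)).
  assert (exp (- IZR top * band_height) <= exp (- IZR j * band_height)).
  { apply exp_le_exp. apply IZR_le in Hj. pose proof band_height_gt. nra. }
  nra.
Qed.

Lemma ball_brick_index y : pt_dist x y <= d -> (1 <= band y)%Z ->
  brick_index y = wall (band y) \/
  (brick_index y = (wall (band y) + 1)%Z /\
   px x - spread < (IZR (brick_index y) + 1/2) * brick_width (band y) <= px x + spread).
Proof.
  intros H Hb. pose proof (spread_lt_width (band y) ltac:(pose proof (ball_band y H); lia)).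
  pose proof (exp_pos (2 * d - IZR top * band_height)). fold spread in H1.
  apply Int_part_window; [apply brick_width_pos|lra|apply ball_abscissa; auto].
Qed.

Lemma ball_crosses_one_wall y1 y : pt_dist x y1 <= d -> band y1 = top ->
  brick_index y1 = (wall top + 1)%Z -> pt_dist x y <= d -> band y = (top - 1)%Z ->
  (1 <= top - 1)%Z -> brick_index y = wall (top - 1).
Proof.
  intros H1 B1 I1 H B Htop.
  destruct (ball_brick_index y H ltac:(lia)) as [Ei|[_ Hwall]]; [rewrite B in Ei; exact Ei|].
  exfalso.
  destruct (ball_brick_index y1 H1 ltac:(lia)) as [Ei1|[_ Hwall1]]; [rewrite B1 in Ei1; lia|].
  rewrite B, brick_width_pred in Hwall. rewrite B1 in Hwall1.
  apply (brick_walls_apart (brick_width top) spread (px x) (brick_index y1) (brick_index y));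
    auto using brick_width_pos.
  apply spread_lt_width; lia.
Qed.

Lemma three_bricks : exists ks, length ks = 3%nat /\
  forall y, pt_dist x y <= d -> In (brick y) ks.
Proof.
  destruct (Z_le_gt_dec top 0) as [T0|T0].
  { exists [(0, 0); (0, 0); (0, 0)]%Z. split; [reflexivity|]. intros y H. left. symmetry.
    apply brick_zero. pose proof (ball_band y H); pose proof (band_nonneg y). lia. }
  destruct (Z.eq_dec top 1) as [T1|T1].
  { exists [(0, 0); (1, wall 1); (1, wall 1 + 1)]%Z. split; [reflexivity|]. intros y H.
    pose proof (ball_band y H); pose proof (band_nonneg y).
    destruct (Z.eq_dec (band y) 0) as [B0|B0]; [left; symmetry; apply brick_zero, B0|].
    assert (B : band y = 1%Z) by lia. rewrite brick_pos, B by exact B0. right.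
    destruct (ball_brick_index y H ltac:(lia)) as [Ei|[Ei _]];
      rewrite B in Ei; rewrite Ei; simpl; auto. }
  destruct (classic (exists y1, pt_dist x y1 <= d /\ band y1 = top /\
                                brick_index y1 = (wall top + 1)%Z)) as [(y1 & H1 & B1 & I1)|Hno].
  - exists [(top, wall top); (top, wall top + 1); (top - 1, wall (top - 1))]%Z.
    split; [reflexivity|]. intros y H. pose proof (ball_band y H).
    rewrite brick_pos by lia.
    destruct (Z.eq_dec (band y) top) as [B|B].
    + rewrite B. destruct (ball_brick_index y H ltac:(lia)) as [Ei|[Ei _]];
        rewrite B in Ei; rewrite Ei; simpl; auto.
    + assert (B' : band y = (top - 1)%Z) by lia. rewrite B'. right; right; left.
      rewrite (ball_crosses_one_wall y1 y); auto; lia.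
  - exists [(top, wall top); (top - 1, wall (top - 1)); (top - 1, wall (top - 1) + 1)]%Z.
    split; [reflexivity|]. intros y H. pose proof (ball_band y H).
    rewrite brick_pos by lia.
    destruct (Z.eq_dec (band y) top) as [B|B].
    + rewrite B. left. destruct (ball_brick_index y H ltac:(lia)) as [Ei|[Ei _]];
        rewrite B in Ei; [rewrite Ei; reflexivity|].
      exfalso. apply Hno. exists y. auto.
    + assert (B' : band y = (top - 1)%Z) by lia. rewrite B'. right.
      destruct (ball_brick_index y H ltac:(lia)) as [Ei|[Ei _]];
        rewrite B' in Ei; rewrite Ei; simpl; auto.
Qed.

End Ball.
End Bricks.

Lemma cluster_space_asdim_le2 : asdim_le cluster_space 2.
Proof.
  apply (asdim_le_of_keys cluster_space (Z * Z)). intros d Hd.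
  destruct (INR_unbounded (exp (2 * d) / 2)) as [q Hq].
  assert (Hq' : exp (2 * d) < 2 * INR q) by lra.
  exists (brick d q), (brick_diameter d q). split.
  - exact (brick_diameter_bound d Hd q Hq').
  - exact (three_bricks d Hd q Hq').
Qed.

Theorem mainTheorem1 :
  exists X : MetricSpace,
    gromov_hyperbolic X /\ visual X /\
    asdim_eq X 2 /\
    (forall w : X, covdim_eq (boundary X w) (boundary_open X w) 0).
Proof.
  exists cluster_space.
  split; [exact cluster_space_hyperbolic|].
  split; [exact cluster_space_visual|].
  split; [split; [exact cluster_space_asdim_le2|exact cluster_space_not_asdim_le1]|].
  exact cluster_space_boundary_dim.
Qed.
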